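(* Let $K\in\mathbb{R}^{m\times n}$, $P_0\in\mathbb{R}^{n\times n}$ symmetric, and $H\in\mathbb{R}^{m\times m}$ diagonal with $P_0+K^\top HK\succ0$. Suppose $H=H_p-H_n$ with diagonal $H_p\succ0$, $H_n\succeq0$ and $P_0-K^\top H_nK\succeq0$. Let $$V(x)=\tfrac12\big(x^\top P_0x+x^\top K^\top HKx-\mathrm{dz}(Kx)^\top H\,\mathrm{dz}(Kx)\big)=\begin{bmatrix}x\\ \mathrm{dz}(Kx)\end{bmatrix}^\top Q\begin{bmatrix}x\\ \mathrm{dz}(Kx)\end{bmatrix},\quad Q=\tfrac12\begin{bmatrix}P_0+K^\top HK&0\\0&-H\end{bmatrix}.$$ Then there exists a diagonal $T_0\succ0$ with $Q_{11}\succ0$ and $Q-\Sigma_0\succeq0$; consequently $V$ is positive definite and radially unbounded.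
   Context: Decentralized saturation $\mathrm{sat}(u)_i=\min\{\overline{u}_i,\max\{-\underline{u}_i,u_i\}\}$ with $\overline{u}_i,\underline{u}_i>0$; $\mathrm{dz}(u)=u-\mathrm{sat}(u)$. $Q_{11}$ denotes the upper-left $n\times n$ block of $Q$, and $\Sigma_0=\begin{bmatrix}0&K^\top T_0\\ T_0K&-2T_0\end{bmatrix}$. *)

From HB Require Import structures.
From mathcomp Require Import all_boot all_order all_algebra.
Set Implicit Arguments. Unset Strict Implicit. Unset Printing Implicit Defensive.
Import Order.TTheory GRing.Theory Num.Theory.
Local Open Scope ring_scope.

Definition qform (R : ringType) (k : nat) (A : 'M[R]_k) (x : 'cV[R]_k) : R :=
  (x^T *m A *m x) ord0 ord0.

Definition posdef (R : numDomainType) (k : nat) (A : 'M[R]_k) : Prop :=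
  A^T = A /\ forall x : 'cV[R]_k, x != 0 -> 0 < qform A x.
Definition possemidef (R : numDomainType) (k : nat) (A : 'M[R]_k) : Prop :=
  A^T = A /\ forall x : 'cV[R]_k, 0 <= qform A x.

Definition sat (R : realDomainType) (m : nat) (ub lb : 'cV[R]_m) (u : 'cV[R]_m)
  : 'cV[R]_m :=
  \col_i Num.min (ub i ord0) (Num.max (- lb i ord0) (u i ord0)).
Definition dz (R : realDomainType) (m : nat) (ub lb : 'cV[R]_m) (u : 'cV[R]_m)
  : 'cV[R]_m := u - sat ub lb u.

Definition Qmat (R : fieldType) (m n : nat) (P0 : 'M[R]_n) (K : 'M[R]_(m, n))
  (H : 'M[R]_m) : 'M[R]_(n + m) :=
  (2%:R)^-1 *: block_mx (P0 + K^T *m H *m K) 0 0 (- H).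

Definition Sigma0 (R : ringType) (m n : nat) (K : 'M[R]_(m, n)) (T0 : 'M[R]_m)
  : 'M[R]_(n + m) :=
  block_mx 0 (K^T *m T0) (T0 *m K) (- (2%:R *: T0)).

Definition Vfun (R : realFieldType) (m n : nat) (ub lb : 'cV[R]_m) (P0 : 'M[R]_n)
  (K : 'M[R]_(m, n)) (H : 'M[R]_m) (x : 'cV[R]_n) : R :=
  (2%:R)^-1 * (qform P0 x + qform (K^T *m H *m K) x
               - qform H (dz ub lb (K *m x))).

Definition normsq (R : ringType) (k : nat) (x : 'cV[R]_k) : R :=
  \sum_i x i ord0 ^+ 2.

From HB Require Import structures.
From mathcomp Require Import all_boot all_order all_algebra.
From mathcomp Require Import ring lra.
Import Order.TTheory GRing.Theory Num.Theory.
Set Implicit Arguments. Unset Strict Implicit. Unset Printing Implicit Defensive.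
Local Open Scope ring_scope.

(* With T0 = Hp / 2 and A = P0 - K^T Hn K, the matrix Q - Sigma0 is
   1/2 ([I 0]^T A [I 0] + [K -I]^T Hp [K -I] + [0 I]^T Hn [0 I]), hence
   positive semidefinite.  Evaluated at (x, dz(Kx)) this splits
   2 V(x) = q_A(x) + q_Hp(sat(Kx)) + q_Hn(dz(Kx)) + 2 sat(Kx)^T Hp dz(Kx),
   a sum of nonnegative terms, the last one by the sector property
   sat_i dz_i >= 0.  If x != 0 then either Kx = 0 and q_A(x) > 0, or
   sat(Kx) != 0 and q_Hp(sat(Kx)) > 0.  On a sublevel set V <= M every
   sat_i dz_i, hence every |(Kx)_i|, is bounded, so is the positive definite
   form q_A(x) + |Kx|^2, and it dominates |x|^2 with constant tr((A + K^T K)^-1). *)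

Definition bform (R : nzRingType) (k : nat) (G : 'M[R]_k) (y w : 'cV[R]_k) : R :=
  (y^T *m G *m w) ord0 ord0.

Section QuadraticForm.
Variable R : comNzRingType.
Implicit Types (k l : nat).

Lemma qform0 k (G : 'M[R]_k) : qform G 0 = 0.
Proof. by rewrite /qform mulmx0 mxE. Qed.

Lemma qformD k (A B : 'M[R]_k) x : qform (A + B) x = qform A x + qform B x.
Proof. by rewrite /qform mulmxDr mulmxDl mxE. Qed.

Lemma qformB k (A B : 'M[R]_k) x : qform (A - B) x = qform A x - qform B x.
Proof. by rewrite /qform mulmxBr mulmxBl !mxE. Qed.

Lemma qformZ k (a : R) (A : 'M[R]_k) x : qform (a *: A) x = a * qform A x.
Proof. by rewrite /qform -scalemxAr -scalemxAl mxE. Qed.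

Lemma qform_mulmx k l (B : 'M[R]_(k, l)) (M : 'M[R]_k) z :
  qform (B^T *m M *m B) z = qform M (B *m z).
Proof. by rewrite /qform trmx_mul !mulmxA. Qed.

Lemma qform_delta k (M : 'M[R]_k) i : qform M (delta_mx i 0) = M i i.
Proof. by rewrite /qform trmx_delta -rowE -colE !mxE. Qed.

Lemma qform_trmx_mul k l (B : 'M[R]_(k, l)) z : qform (B^T *m B) z = normsq (B *m z).
Proof.
rewrite -[B^T]mulmx1 qform_mulmx /qform mulmx1 mxE.
by apply: eq_bigr => i _; rewrite mxE expr2.
Qed.

Lemma bform0r k (G : 'M[R]_k) y : bform G y 0 = 0.
Proof. by rewrite /bform mulmx0 mxE. Qed.

Lemma bformZr k (G : 'M[R]_k) y w t : bform G y (t *: w) = t * bform G y w.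
Proof. by rewrite /bform -scalemxAr mxE. Qed.

Lemma bform_diag k (D : 'M[R]_k) y w : is_diag_mx D ->
  bform D y w = \sum_i D i i * (y i ord0 * w i ord0).
Proof.
move=> /is_diag_mxP hD; rewrite /bform mxE; apply: eq_bigr => j _.
rewrite mxE (bigD1 j) //= big1 ?addr0 => [|l lj]; last first.
  by rewrite hD ?mulr0 //; apply: contraNneq lj => /val_inj ->.
by rewrite !mxE; ring.
Qed.

Lemma qformDr k (G : 'M[R]_k) y w : G^T = G ->
  qform G (y + w) = qform G y + 2 * bform G y w + qform G w.
Proof.
move=> GT; have wGy : w^T *m G *m y = (y^T *m G *m w)^T.
  by rewrite !trmx_mul trmxK GT mulmxA.
rewrite /qform /bform [(y + w)^T]linearD /= !mulmxDl !mulmxDr wGy !mxE; ring.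
Qed.

Lemma qformZr k (G : 'M[R]_k) w t : qform G (t *: w) = t ^+ 2 * qform G w.
Proof.
rewrite /qform [(t *: w)^T]linearZ /= -scalemxAl -scalemxAr -scalemxAl scalerA.
by rewrite mxE expr2.
Qed.

End QuadraticForm.

Section Definite.
Variable R : realFieldType.
Implicit Types (k l : nat).

Lemma posdef_possemidef k (G : 'M[R]_k) : posdef G -> possemidef G.
Proof.
move=> [GT hG]; split=> // x.
by have [->|x0] := eqVneq x 0; [rewrite qform0 | exact/ltW/hG].
Qed.

Lemma possemidefD k (A B : 'M[R]_k) :
  possemidef A -> possemidef B -> possemidef (A + B).
Proof.
move=> [AT hA] [BT hB]; split; first by rewrite linearD /= AT BT.
by move=> x; rewrite qformD addr_ge0.
Qed.

Lemma possemidefZ k (a : R) (A : 'M[R]_k) :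
  0 <= a -> possemidef A -> possemidef (a *: A).
Proof.
move=> a0 [AT hA]; split; first by rewrite linearZ /= AT.
by move=> x; rewrite qformZ mulr_ge0.
Qed.

Lemma posdefZ k (a : R) (A : 'M[R]_k) : 0 < a -> posdef A -> posdef (a *: A).
Proof.
move=> a0 [AT hA]; split; first by rewrite linearZ /= AT.
by move=> x x0; rewrite qformZ mulr_gt0 // hA.
Qed.

Lemma possemidef_mulmx k l (B : 'M[R]_(k, l)) (M : 'M[R]_k) :
  possemidef M -> possemidef (B^T *m M *m B).
Proof.
move=> [MT hM]; split; first by rewrite !trmx_mul trmxK MT mulmxA.
by move=> z; rewrite qform_mulmx.
Qed.

Lemma normsq_ge0 k (v : 'cV[R]_k) : 0 <= normsq v.
Proof. by apply: sumr_ge0 => i _; apply: sqr_ge0. Qed.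

Lemma normsq_gt0 k (v : 'cV[R]_k) : v != 0 -> 0 < normsq v.
Proof.
move=> v0; rewrite lt0r normsq_ge0 andbT; apply: contra v0 => /eqP v2_0.
apply/eqP/matrixP => i j; rewrite (ord1 j) mxE; apply/eqP.
by rewrite -sqrf_eq0 (psumr_eq0P _ v2_0) // => l _; apply: sqr_ge0.
Qed.

Lemma posdefD_mulmx k l (A : 'M[R]_l) (B : 'M[R]_(k, l)) :
  possemidef A -> (forall x, B *m x = 0 -> x != 0 -> 0 < qform A x) ->
  posdef (A + B^T *m B).
Proof.
move=> [AT hA] hker; split; first by rewrite linearD /= AT trmx_mul trmxK.
move=> x x0; rewrite qformD qform_trmx_mul.
have [Bx0|Bx0] := eqVneq (B *m x) 0.
  rewrite Bx0 /normsq big1 ?addr0 => [|i _]; first exact: hker.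
  by rewrite mxE expr0n.
by rewrite ltr_wpDl // normsq_gt0.
Qed.

Lemma posdef_unitmx k (G : 'M[R]_k) : posdef G -> G \in unitmx.
Proof.
move=> [_ hG]; rewrite -row_free_unit -kermx_eq0.
apply/eqP/row_matrixP => i; rewrite row0.
set v := row i (kermx G).
have vG : v *m G = 0 by apply/sub_kermxP; apply: row_sub.
apply/eqP; apply: contraT => v0.
have vT0 : v^T != 0 by apply: contra v0 => /eqP vT0; rewrite -(trmxK v) vT0 linear0.
by have := hG _ vT0; rewrite /qform trmxK vG mul0mx mxE ltxx.
Qed.

Lemma qform_invmx k (G : 'M[R]_k) x : G^T = G -> G \in unitmx ->
  qform (invmx G) x = qform G (invmx G *m x).
Proof. by move=> GT GU; rewrite /qform trmx_mul trmx_inv GT !mulmxA mulmxKV. Qed.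

Lemma posdef_invmx k (G : 'M[R]_k) : posdef G -> posdef (invmx G).
Proof.
move=> hG; have GU := posdef_unitmx hG; case: hG => GT hG.
split; first by rewrite trmx_inv GT.
move=> x x0; rewrite qform_invmx //; apply: hG.
by apply: contra x0 => /eqP Gx0; rewrite -(mulKVmx GU x) Gx0 mulmx0.
Qed.

Lemma posdef_diag_gt0 k (G : 'M[R]_k) i : posdef G -> 0 < G i i.
Proof.
move=> [_ hG]; rewrite -qform_delta; apply: hG.
apply/negP => /eqP /matrixP /(_ i 0); rewrite !mxE !eqxx /=.
by apply/eqP; rewrite oner_eq0.
Qed.

Lemma mxtrace_posdef_ge0 k (G : 'M[R]_k) : posdef G -> 0 <= \tr G.
Proof. by move=> hG; apply: sumr_ge0 => i _; apply/ltW/posdef_diag_gt0. Qed.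

Lemma posdef_cauchy_schwarz k (G : 'M[R]_k) y w : posdef G ->
  bform G y w ^+ 2 <= qform G y * qform G w.
Proof.
move=> hG; have [->|w0] := eqVneq w 0; first by rewrite bform0r qform0 expr0n mulr0.
have [GT _] := hG; have [_ Gpsd] := posdef_possemidef hG.
have c0 : 0 < qform G w by apply: hG.2.
have := Gpsd (y + (- (bform G y w / qform G w)) *: w).
rewrite qformDr // bformZr qformZr.
set a := qform G y; set c := qform G w; set p := bform G y w.
have -> : a + 2 * (- (p / c) * p) + (- (p / c)) ^+ 2 * c = (a * c - p ^+ 2) / c.
  by field; rewrite gt_eqF.
by rewrite pmulr_lge0 ?invr_gt0 // subr_ge0.
Qed.

Lemma normsq_le_tr_invmx k (G : 'M[R]_k) x : posdef G ->
  normsq x <= \tr (invmx G) * qform G x.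
Proof.
(* x_i = <x, G^-1 e_i>_G and q_G(G^-1 e_i) = (G^-1)_ii, so Cauchy-Schwarz bounds each x_i^2. *)
move=> hG; have GU := posdef_unitmx hG; have GT := hG.1.
rewrite /normsq /mxtrace mulr_suml; apply: ler_sum => i _.
pose b : 'cV[R]_k := invmx G *m delta_mx i 0.
have Gb : G *m b = delta_mx i 0 by rewrite mulmxA mulmxV ?mul1mx.
have <- : bform G x b = x i ord0 by rewrite /bform -mulmxA Gb -colE !mxE.
have <- : qform G b = invmx G i i by rewrite -qform_invmx ?qform_delta.
by rewrite mulrC; apply: posdef_cauchy_schwarz.
Qed.

End Definite.

Section Saturation.
Variable R : realFieldType.

Definition clamp (a b v : R) : R := Num.min a (Num.max (- b) v).

Variant clamp_spec (a b v : R) : R -> Type :=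
  | ClampLow of v < - b : clamp_spec a b v (- b)
  | ClampMid of - b <= v & v <= a : clamp_spec a b v v
  | ClampHigh of a < v : clamp_spec a b v a.

Lemma clampP a b v : 0 <= a -> 0 <= b -> clamp_spec a b v (clamp a b v).
Proof.
move=> a0 b0; rewrite /clamp; have [vb|bv] := ltP v (- b).
  by rewrite min_r; [constructor | lra].
by have [va|av] := leP v a; constructor.
Qed.

Lemma clamp0 a b : 0 <= a -> 0 <= b -> clamp a b 0 = 0.
Proof. by move=> a0 b0; case: clampP => //; lra. Qed.

Lemma clamp_eq0 a b v : 0 < a -> 0 < b -> clamp a b v = 0 -> v = 0.
Proof. by move=> a0 b0; case: clampP; lra. Qed.

Lemma clamp_sector a b v : 0 <= a -> 0 <= b -> 0 <= clamp a b v * (v - clamp a b v).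
Proof. by move=> a0 b0; case: (clampP v a0 b0) => *; nra. Qed.

Lemma norm_le_clamp_sector a b v c : 0 < a -> 0 < b ->
  clamp a b v * (v - clamp a b v) <= c -> `|v| <= a + b + c / a + c / b.
Proof.
move=> a0 b0 hc; have c0 := le_trans (clamp_sector v (ltW a0) (ltW b0)) hc.
have ca : 0 <= c / a by rewrite divr_ge0 // ltW.
have cb : 0 <= c / b by rewrite divr_ge0 // ltW.
rewrite ler_norml; move: hc.
case: (clampP v (ltW a0) (ltW b0)) => [vb|bv va|av] hc; [|lra|].
  have : - (v + b) <= c / b by rewrite ler_pdivlMr //; nra.
  lra.
have : v - a <= c / a by rewrite ler_pdivlMr //; nra.
lra.
Qed.

Variables (m : nat) (ub lb : 'cV[R]_m).
Hypotheses (ub_gt0 : forall i, 0 < ub i ord0) (lb_gt0 : forall i, 0 < lb i ord0).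

Lemma sat_mxE u i : sat ub lb u i ord0 = clamp (ub i ord0) (lb i ord0) (u i ord0).
Proof. by rewrite mxE. Qed.

Lemma dz_mxE u i : dz ub lb u i ord0 = u i ord0 - sat ub lb u i ord0.
Proof. by rewrite !mxE. Qed.

Lemma sat0 : sat ub lb 0 = 0.
Proof.
by apply/matrixP => i j; rewrite (ord1 j) sat_mxE !mxE clamp0 ?ltW.
Qed.

Lemma dz0 : dz ub lb 0 = 0.
Proof. by rewrite /dz sat0 subrr. Qed.

Lemma sat_eq0 u : sat ub lb u = 0 -> u = 0.
Proof.
move=> /matrixP s0; apply/matrixP => i j; rewrite (ord1 j) mxE.
by apply: (clamp_eq0 (ub_gt0 i) (lb_gt0 i)); rewrite -sat_mxE s0 mxE.
Qed.

Lemma sat_dz_sector u i : 0 <= sat ub lb u i ord0 * dz ub lb u i ord0.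
Proof. by rewrite dz_mxE sat_mxE clamp_sector ?ltW. Qed.

Lemma bform_sat_dz_ge0 (D : 'M[R]_m) u : is_diag_mx D -> (forall i, 0 <= D i i) ->
  0 <= bform D (sat ub lb u) (dz ub lb u).
Proof.
move=> Dd D0; rewrite bform_diag //; apply: sumr_ge0 => i _.
by rewrite mulr_ge0 ?sat_dz_sector.
Qed.

End Saturation.

Lemma Qmat_sub_Sigma0 (R : numFieldType) (m n : nat) (K : 'M[R]_(m, n))
    (P0 : 'M[R]_n) (Hp Hn : 'M[R]_m) :
  Qmat P0 K (Hp - Hn) - Sigma0 K (2^-1 *: Hp) = 2^-1 *:
    ((row_mx 1%:M 0 : 'M_(n, n + m))^T *m (P0 - K^T *m Hn *m K) *m row_mx 1%:M 0
     + (row_mx K (- 1%:M))^T *m Hp *m row_mx K (- 1%:M)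
     + (row_mx 0 1%:M : 'M_(m, n + m))^T *m Hn *m row_mx 0 1%:M).
Proof.
have n2 : (2 : R) != 0 by rewrite pnatr_eq0.
rewrite /Qmat /Sigma0 !tr_row_mx -!mulmxA !mul_mx_row !mul_col_mx -!block_mxEh.
have trN1 : (- 1%:M : 'M[R]_m)^T = - 1%:M by rewrite linearN /= trmx1.
rewrite !add_block_mx !scale_block_mx opp_block_mx add_block_mx trN1 !trmx1 !trmx0.
rewrite ?mulmx1 ?mul1mx ?mulmx0 ?mul0mx ?mulmxN ?mulNmx ?mulmx1 ?mul1mx.
congr block_mx.
- by rewrite !addr0 subr0 mulmxBl mulmxBr !mulmxA addrA addrAC.
- by rewrite scaler0 !sub0r addr0 scalerN -scalemxAr.
- by rewrite scaler0 !sub0r addr0 scalerN -scalemxAl.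
- rewrite add0r !opprK scalerA mulfV // scale1r.
  by apply/matrixP => i j; rewrite !mxE; field.
Qed.

Section Lyapunov.
Variables (R : realFieldType) (m n : nat) (K : 'M[R]_(m, n)) (P0 : 'M[R]_n).
Variables (Hp Hn : 'M[R]_m) (ub lb : 'cV[R]_m).
Hypotheses (ub_gt0 : forall i, 0 < ub i ord0) (lb_gt0 : forall i, 0 < lb i ord0).
Hypotheses (Hp_diag : is_diag_mx Hp) (Hp_pd : posdef Hp) (Hn_psd : possemidef Hn).
Hypothesis A_psd : possemidef (P0 - K^T *m Hn *m K).
Hypothesis Q11_pd : posdef (P0 + K^T *m (Hp - Hn) *m K).

Local Notation A := (P0 - K^T *m Hn *m K).
Local Notation V := (Vfun ub lb P0 K (Hp - Hn)).

Lemma Vfun_split x :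
  2 * V x = qform A x + qform Hp (sat ub lb (K *m x)) + qform Hn (dz ub lb (K *m x))
            + 2 * bform Hp (sat ub lb (K *m x)) (dz ub lb (K *m x)).
Proof.
rewrite /Vfun mulrA mulfV ?pnatr_eq0 // mul1r.
set u := K *m x; set s := sat ub lb u; set d := dz ub lb u.
have -> : qform P0 x = qform A x + qform Hn u by rewrite qformB qform_mulmx addrNK.
rewrite qform_mulmx -/u !qformB.
have -> : qform Hp u = qform Hp s + 2 * bform Hp s d + qform Hp d.
  by rewrite -qformDr ?Hp_pd.1 // /d /dz addrC subrK.
ring.
Qed.

Lemma Vfun_terms_ge0 x :
  [/\ 0 <= qform A x, 0 <= qform Hp (sat ub lb (K *m x)),
       0 <= qform Hn (dz ub lb (K *m x))
     & 0 <= bform Hp (sat ub lb (K *m x)) (dz ub lb (K *m x))].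
Proof.
split; [exact: A_psd.2 | exact: (posdef_possemidef Hp_pd).2 | exact: Hn_psd.2 |].
exact: bform_sat_dz_ge0 (fun i => ltW (posdef_diag_gt0 i Hp_pd)).
Qed.

Lemma Vfun0 : V 0 = 0.
Proof. by rewrite /Vfun mulmx0 dz0 // !qform0 addr0 subr0 mulr0. Qed.

Lemma qform_gt0_kernel x : K *m x = 0 -> x != 0 -> 0 < qform A x.
Proof.
move=> Kx0 x0; have := Q11_pd.2 x x0.
by rewrite qformB qformD !qform_mulmx Kx0 !qform0 subr0 addr0.
Qed.

Lemma Vfun_gt0 x : x != 0 -> 0 < V x.
Proof.
move=> x0; rewrite -(@pmulr_rgt0 _ 2) // Vfun_split.
have [Kx0|Kx0] := eqVneq (K *m x) 0.
  rewrite Kx0 dz0 // sat0 // !qform0 bform0r !addr0 mulr0 addr0.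
  exact: qform_gt0_kernel.
have s0 : sat ub lb (K *m x) != 0.
  by apply: contra Kx0 => /eqP /(sat_eq0 ub_gt0 lb_gt0) ->.
have := Hp_pd.2 _ s0; have [qA _ qd b0] := Vfun_terms_ge0 x; lra.
Qed.

Lemma Vfun_sublevel_bounded M : exists B, forall x, V x <= M -> normsq x <= B.
Proof.
have Hp_gt0 i : 0 < Hp i i := posdef_diag_gt0 i Hp_pd.
have G_pd : posdef (A + K^T *m K) := posdefD_mulmx A_psd qform_gt0_kernel.
pose C i := ub i ord0 + lb i ord0 + M / Hp i i / ub i ord0 + M / Hp i i / lb i ord0.
exists (\tr (invmx (A + K^T *m K)) * (2 * M + \sum_i C i ^+ 2)) => x Vx.
apply: le_trans (normsq_le_tr_invmx x G_pd) _.
apply: ler_wpM2l; first exact/mxtrace_posdef_ge0/posdef_invmx.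
have := Vfun_split x; have := Vfun_terms_ge0 x.
set s := sat ub lb (K *m x); set d := dz ub lb (K *m x); set b := bform Hp s d.
move=> [qA qs qd b0] Vx2; rewrite qformD qform_trmx_mul lerD //; first lra.
apply: ler_sum => i _.
have term_le : Hp i i * (s i ord0 * d i ord0) <= b.
  rewrite /b bform_diag // (bigD1 i) //= lerDl.
  by apply: sumr_ge0 => j _; rewrite mulr_ge0 ?sat_dz_sector // ltW.
have sd_le : s i ord0 * d i ord0 <= M / Hp i i.
  by rewrite ler_pdivlMr // mulrC; lra.
(* the sector bound on the i-th channel bounds |(Kx)_i| by C i *)
move: sd_le; rewrite /d dz_mxE /s sat_mxE.
move=> /(norm_le_clamp_sector (ub_gt0 i) (lb_gt0 i)); rewrite -/(C i) => uC.
rewrite -real_normK ?num_real // ler_sqr ?nnegrE //.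
exact: le_trans (normr_ge0 _) uC.
Qed.

End Lyapunov.

Theorem lemma3 (R : realFieldType) (m n : nat) (K : 'M[R]_(m, n))
  (P0 : 'M[R]_n) (H Hp Hn : 'M[R]_m) (ub lb : 'cV[R]_m) :
  (forall i, 0 < ub i ord0) -> (forall i, 0 < lb i ord0) ->
  P0^T = P0 -> is_diag_mx H -> posdef (P0 + K^T *m H *m K) ->
  H = Hp - Hn -> is_diag_mx Hp -> is_diag_mx Hn ->
  posdef Hp -> possemidef Hn -> possemidef (P0 - K^T *m Hn *m K) ->
  (exists T0 : 'M[R]_m,
      is_diag_mx T0 /\ posdef T0 /\
      posdef (ulsubmx (Qmat P0 K H)) /\
      possemidef (Qmat P0 K H - Sigma0 K T0)) /\
  (Vfun ub lb P0 K H 0 = 0 /\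
   forall x : 'cV[R]_n, x != 0 -> 0 < Vfun ub lb P0 K H x) /\
  (forall M : R, exists r : R, forall x : 'cV[R]_n,
      r <= normsq x -> M <= Vfun ub lb P0 K H x).
Proof.
move=> ub_gt0 lb_gt0 _ _ Q11_pd HE Hp_diag _ Hp_pd Hn_psd A_psd; subst H.
have half_gt0 : 0 < (2%:R : R)^-1 by rewrite invr_gt0 ltr0n.
split; [exists (2^-1 *: Hp); split; [|split; [|split]] | split; [split|]].
- by apply/is_diag_mxP => i j ij; rewrite mxE (is_diag_mxP Hp_diag) ?mulr0.
- exact: posdefZ.
- by rewrite /Qmat scale_block_mx block_mxKul; apply: posdefZ.
- rewrite Qmat_sub_Sigma0; apply: possemidefZ; first exact: ltW.
  apply: possemidefD; [apply: possemidefD|]; apply: possemidef_mulmx => //.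
  exact: posdef_possemidef.
- exact: Vfun0.
- exact: Vfun_gt0.
- move=> M; have [B hB] := Vfun_sublevel_bounded ub_gt0 lb_gt0 Hp_diag Hp_pd
    Hn_psd A_psd Q11_pd M.
  exists (B + 1) => x Bx; rewrite leNgt; apply/negP => /ltW /hB; lra.
Qed.
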